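(* Under the standing setup and assumptions (A1)–(A3) described in the context, let $\delta>0$ be as in (A3). Let $(p^b_i)_{i\in I}$ and $(p^t_j)_{j\in J}$ be probability vectors with $p^b_i=0$ for $i\notin I_\delta$ and $p^t_j=0$ for $j\notin J_\delta$; let $\rho^b=\mathrm{diag}(p^b_i)$, $\rho^t=\mathrm{diag}(p^t_j)$, and $$\rho_0=\sum_{i,i'\in I}\sum_{j,j'\in J}\rho^b_{ii'}\rho^t_{jj'}\,|i,j\rangle\langle i',j'|.$$ Then $U\rho_0U^\dagger$ is supported in $V$, and there exist Hermitian matrices $\sigma^b$ (indexed by $I\times I$) and $\sigma^t$ (indexed by $J\times J$) such that $$U\rho_0U^\dagger=\sum_{i,i'\in I}\sum_{j,j'\in J}\sigma^b_{ii'}\sigma^t_{jj'}\,|i,j\rangle\langle i',j'|,$$ and $\mathrm{Spec}(\sigma^b)=\mathrm{Spec}(\rho^b)$, $\mathrm{Spec}(\sigma^t)=\mathrm{Spec}(\rho^t)$ (equality of eigenvalues counted with multiplicity).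
   Context: Standing setup. $\mathcal H$ is a finite-dimensional complex Hilbert space; $I$ and $J$ are finite index sets and $\{|i,j\rangle: i\in I,j\in J\}$ is an orthonormal family in $\mathcal H$ (physically: low-energy edge states of a gapped 2D system on a cylinder, $i$ labelling the bottom edge and $j$ the top edge, in a fixed topological sector). $V$ denotes their span. Real numbers $\varepsilon^b_i$ ($i\in I$) and $\varepsilon^t_j$ ($j\in J$) are given (physically $\varepsilon^b_i=E^b_i-\mu_bN^b_i$, $\varepsilon^t_j=E^t_j-\mu_tN^t_j$). There is a distinguished index, denoted $\Omega$, in $I$ and in $J$ with $\varepsilon^b_\Omega=\varepsilon^t_\Omega=0\le \varepsilon^b_i,\varepsilon^t_j$ for all $i,j$. For $\delta>0$ put $I_\delta=\{i\in I:\varepsilon^b_i\le\delta\}$, $J_\delta=\{j\in J:\varepsilon^t_j\le\delta\}$, $V_\delta=\mathrm{span}\{|i,j\rangle:i\in I_\delta,j\in J_\delta\}$. $\mathcal A_b$ and $\mathcal A_t$ are sets of linear operators on $\mathcal H$ (''operators supported near the bottom edge / top edge''), each closed under sums, scalar multiples, products and adjoints and containing the identity, such that every element of $\mathcal A_b$ commutes with every element of $\mathcal A_t$. $U$ is a unitary on $\mathcal H$ (the flux-insertion evolution, a finite-time evolution by a local Hamiltonian) such that $U^\dagger\mathcal A_bU\subseteq\mathcal A_b$, $U\mathcal A_bU^\dagger\subseteq\mathcal A_b$, $U^\dagger\mathcal A_tU\subseteq\mathcal A_t$, $U\mathcal A_tU^\dagger\subseteq\mathcal A_t$ (idealized Lieb–Robinson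 locality). Assumptions. (A1) For all $i,i'\in I$ there is $O^b_{i'i}\in\mathcal A_b$ with $O^b_{i'i}|k,j\rangle=\delta_{ki}|i',j\rangle$ for all $k\in I,j\in J$; for all $j,j'\in J$ there is $O^t_{j'j}\in\mathcal A_t$ with $O^t_{j'j}|i,l\rangle=\delta_{lj}|i,j'\rangle$ for all $i\in I,l\in J$. (A2) For all $i\in I$, $j\in J$, $O^b\in\mathcal A_b$, $O^t\in\mathcal A_t$: $\langle i,j|O^bO^t|i,j\rangle=\langle i,j|O^b|i,j\rangle\langle i,j|O^t|i,j\rangle$. (A3) There is $\delta>0$ with $U V_\delta\subseteq V$. (The diagonal $\rho^b,\rho^t$ model the edge Gibbs states at temperatures well below $\delta$.) *)

(* Complex numbers: algC. Hilbert space H = 'cV[algC]_n with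
   the standard inner product; index sets I = 'I_m, J = 'I_k. *)
From mathcomp Require Import all_boot all_order all_algebra algC.
Set Implicit Arguments. Unset Strict Implicit. Unset Printing Implicit Defensive.
Import Order.TTheory GRing.Theory Num.Theory.
Local Open Scope ring_scope.

Definition adjmx (p q : nat) (A : 'M[algC]_(p, q)) : 'M[algC]_(q, p) :=
  (map_mx Num.conj A)^T.

Definition braket (n : nat) (v : 'cV[algC]_n) (A : 'M[algC]_n) (w : 'cV[algC]_n)
  : algC := (adjmx v *m A *m w) 0 0.

Definition ketbra (n : nat) (v w : 'cV[algC]_n) : 'M[algC]_n := v *m adjmx w.

Definition in_span (n m k : nat) (ket : 'I_m -> 'I_k -> 'cV[algC]_n)
  (P : 'I_m -> bool) (Q : 'I_k -> bool) (v : 'cV[algC]_n) : Prop :=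
  exists c : 'I_m -> 'I_k -> algC,
    v = \sum_(i < m | P i) \sum_(j < k | Q j) c i j *: ket i j.

Definition inV n m k (ket : 'I_m -> 'I_k -> 'cV[algC]_n) :=
  in_span ket predT predT.

Definition inVdelta n m k (ket : 'I_m -> 'I_k -> 'cV[algC]_n)
  (eb : 'I_m -> algC) (et : 'I_k -> algC) (delta : algC) :=
  in_span ket (fun i => eb i <= delta) (fun j => et j <= delta).

Definition prod_op n m k (ket : 'I_m -> 'I_k -> 'cV[algC]_n)
  (Mb : 'M[algC]_m) (Mt : 'M[algC]_k) : 'M[algC]_n :=
  \sum_(i < m) \sum_(i' < m) \sum_(j < k) \sum_(j' < k)
     (Mb i i' * Mt j j') *: ketbra (ket i j) (ket i' j').

Definition star_algebra n (A : 'M[algC]_n -> Prop) : Prop :=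
  [/\ A 1%:M,
      (forall X Y, A X -> A Y -> A (X + Y)),
      (forall (c : algC) X, A X -> A (c *: X)),
      (forall X Y, A X -> A Y -> A (X *m Y)) &
      (forall X, A X -> A (adjmx X))].

From mathcomp Require Import all_boot all_order all_algebra algC ring.
Import Order.TTheory GRing.Theory Num.Theory.
Set Implicit Arguments. Unset Strict Implicit. Unset Printing Implicit Defensive.
Local Open Scope ring_scope.

(* Write psi = U|Omb,Omt>.  It lies in V by (A3), and its expectation values of
   products (bottom operator) x (top operator) factorize, because conjugation
   by U preserves both edge algebras and (A2) holds at |Omb,Omt>; a normalized
   vector of V with this property has product coefficients (product_state).
   Every other low-energy |i,j> is reached from the ground state by the
   label-transition operators of (A1), and their conjugates by U are still edge
   operators.  Locality ((A1), (A2) and commutation of the edges) shows that an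
   edge operator acts on its own label only (bottom_action_coords,
   top_action_coords), so U|i,j> = u_i (x) v_j (low_image_factorizes).
   Therefore U rho0 U^* is the product of the mixtures sum_i p^b_i |u_i><u_i|
   and sum_j p^t_j |v_j><v_j| (product_image_state); unitarity makes the u_i,
   resp. the v_j, orthonormal up to a common scalar (isometry_product_gram),
   which yields Hermitian factors with the required spectra (mixture_spectrum,
   based on char_poly (X Y) = char_poly (Y X)). *)

Lemma adjmxE p q (A : 'M[algC]_(p, q)) i j : adjmx A i j = (A j i)^*.
Proof. by rewrite /adjmx !mxE. Qed.

Lemma adjmxM p q r (A : 'M[algC]_(p, q)) (B : 'M[algC]_(q, r)) :
  adjmx (A *m B) = adjmx B *m adjmx A.
Proof. by rewrite /adjmx map_mxM trmx_mul. Qed.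

Lemma adjmxZ p q c (A : 'M[algC]_(p, q)) : adjmx (c *: A) = c^* *: adjmx A.
Proof. by apply/matrixP=> i j; rewrite !(adjmxE, mxE) rmorphM. Qed.

Lemma adjmx_sum p q I (r : seq I) (P : pred I) (F : I -> 'M[algC]_(p, q)) :
  adjmx (\sum_(i <- r | P i) F i) = \sum_(i <- r | P i) adjmx (F i).
Proof.
apply/matrixP=> i j; rewrite adjmxE !summxE rmorph_sum.
by apply: eq_bigr => l _; rewrite adjmxE.
Qed.

Definition ip n (v w : 'cV[algC]_n) : algC := (adjmx v *m w) 0 0.

Lemma braketE n (v w : 'cV[algC]_n) A : braket v A w = ip v (A *m w).
Proof. by rewrite /braket /ip mulmxA. Qed.

Lemma ip0r n (v : 'cV[algC]_n) : ip v 0 = 0.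
Proof. by rewrite /ip mulmx0 mxE. Qed.

Lemma ipZr n (v w : 'cV[algC]_n) c : ip v (c *: w) = c * ip v w.
Proof. by rewrite /ip -scalemxAr mxE. Qed.

Lemma ip_sumr n I (r : seq I) (P : pred I) (v : 'cV[algC]_n) (F : I -> 'cV_n) :
  ip v (\sum_(i <- r | P i) F i) = \sum_(i <- r | P i) ip v (F i).
Proof. by rewrite /ip mulmx_sumr summxE. Qed.

Lemma ip_conj n (v w : 'cV[algC]_n) : ip w v = (ip v w)^*.
Proof.
rewrite /ip !mxE rmorph_sum; apply: eq_bigr => i _.
by rewrite !adjmxE rmorphM /= conjCK mulrC.
Qed.

Lemma ipZl n (v w : 'cV[algC]_n) c : ip (c *: v) w = c^* * ip v w.
Proof. by rewrite ip_conj ipZr rmorphM /= -ip_conj. Qed.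

Lemma ip_suml n I (r : seq I) (P : pred I) (w : 'cV[algC]_n) (F : I -> 'cV_n) :
  ip (\sum_(i <- r | P i) F i) w = \sum_(i <- r | P i) ip (F i) w.
Proof.
rewrite ip_conj ip_sumr rmorph_sum.
by apply: eq_bigr => i _ /=; rewrite -ip_conj.
Qed.

Lemma ip_adjl n (v w : 'cV[algC]_n) A : ip (A *m v) w = ip v (adjmx A *m w).
Proof. by rewrite /ip adjmxM mulmxA. Qed.

Lemma ketbra_mul n (v u w : 'cV[algC]_n) : ketbra v u *m w = ip u w *: v.
Proof. by rewrite /ketbra -mulmxA (mx11_scalar (adjmx u *m w)) mul_mx_scalar. Qed.

Lemma ip_isometry n (U : 'M[algC]_n) (v w : 'cV[algC]_n) :
  adjmx U *m U = 1%:M -> ip (U *m v) (U *m w) = ip v w.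
Proof. by move=> HU; rewrite ip_adjl mulmxA HU mul1mx. Qed.

Lemma conj_transport n (U O : 'M[algC]_n) (x y : 'cV[algC]_n) :
  adjmx U *m U = 1%:M -> O *m x = y -> U *m y = (U *m O *m adjmx U) *m (U *m x).
Proof. by move=> HU <-; rewrite -!mulmxA (mulmxA (adjmx U)) HU mul1mx. Qed.

Definition orthonormal n m k (ket : 'I_m -> 'I_k -> 'cV[algC]_n) : Prop :=
  forall i j i' j',
    adjmx (ket i j) *m ket i' j' = ((i == i') && (j == j'))%:R%:M.

Definition bottom_transitions n m k (ket : 'I_m -> 'I_k -> 'cV[algC]_n)
    (Ab : 'M[algC]_n -> Prop) : Prop :=
  forall i i' : 'I_m, exists O, Ab O /\
    forall (l : 'I_m) (j : 'I_k), O *m ket l j = (if l == i then ket i' j else 0).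

Definition top_transitions n m k (ket : 'I_m -> 'I_k -> 'cV[algC]_n)
    (At : 'M[algC]_n -> Prop) : Prop :=
  forall j j' : 'I_k, exists O, At O /\
    forall (i : 'I_m) (l : 'I_k), O *m ket i l = (if l == j then ket i j' else 0).

Definition edge_factorization n m k (ket : 'I_m -> 'I_k -> 'cV[algC]_n)
    (Ab At : 'M[algC]_n -> Prop) : Prop :=
  forall i j Ob Ot, Ab Ob -> At Ot ->
    braket (ket i j) (Ob *m Ot) (ket i j)
    = braket (ket i j) Ob (ket i j) * braket (ket i j) Ot (ket i j).

Definition cdot p (x y : 'I_p -> algC) : algC := \sum_a (x a)^* * y a.

Definition outer p (x : 'I_p -> algC) : 'M[algC]_p :=
  \matrix_(a, a') (x a * (x a')^*).

Definition mixture p (d : 'I_p -> algC) (x : 'I_p -> 'I_p -> algC) : 'M[algC]_p :=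
  \sum_i d i *: outer (x i).

Section OrthonormalFamily.
Variables (n m k : nat) (ket : 'I_m -> 'I_k -> 'cV[algC]_n).
Hypothesis Horth : orthonormal ket.

Lemma ket_ip i j i' j' : ip (ket i j) (ket i' j') = ((i == i') && (j == j'))%:R.
Proof. by rewrite /ip Horth mxE eqxx mulr1n. Qed.

Lemma ip_expand (c : 'I_m -> 'I_k -> algC) a b :
  ip (ket a b) (\sum_(a' < m) \sum_(b' < k) c a' b' *: ket a' b') = c a b.
Proof.
rewrite ip_sumr (big_only1 a) // => [|a' ne _]; last first.
  by rewrite ip_sumr big1 // => b' _; rewrite ipZr ket_ip eq_sym (negbTE ne) mulr0.
rewrite ip_sumr (big_only1 b) // => [|b' ne _]; last first.
  by rewrite ipZr ket_ip eqxx (eq_sym b) (negbTE ne) mulr0.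
by rewrite ipZr ket_ip !eqxx mulr1.
Qed.

Lemma inV_expand v :
  inV ket v -> v = \sum_(a < m) \sum_(b < k) ip (ket a b) v *: ket a b.
Proof.
case=> c ->; apply: eq_bigr => a _; apply: eq_bigr => b _.
by rewrite ip_expand.
Qed.

Lemma ket_in_span (P : pred 'I_m) (Q : pred 'I_k) i j :
  P i -> Q j -> in_span ket P Q (ket i j).
Proof.
move=> Pi Qj; exists (fun a b => ((a == i) && (b == j))%:R).
rewrite (big_only1 i) // => [|a ne _]; last first.
  by apply: big1 => b _; rewrite (negbTE ne) scale0r.
rewrite (big_only1 j) // => [|b ne _]; last by rewrite (negbTE ne) andbF scale0r.
by rewrite !eqxx scale1r.
Qed.

Lemma isometry_product_gram (U : 'M[algC]_n) i j i' j'
    (x x' : 'I_m -> algC) (y y' : 'I_k -> algC) :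
  adjmx U *m U = 1%:M ->
  U *m ket i j = \sum_a \sum_b (x a * y b) *: ket a b ->
  U *m ket i' j' = \sum_a \sum_b (x' a * y' b) *: ket a b ->
  ((i == i') && (j == j'))%:R = cdot x x' * cdot y y'.
Proof.
move=> HU Hx Hx'; rewrite -ket_ip -(ip_isometry _ _ HU) Hx Hx' ip_suml mulr_suml.
apply: eq_bigr => a _; rewrite ip_suml mulr_sumr; apply: eq_bigr => b _.
by rewrite ipZl ip_expand rmorphM /=; ring.
Qed.

Lemma prod_op_scale (A A' : 'M[algC]_m) (B B' : 'M[algC]_k) c :
  (forall a a' b b', A a a' * B b b' = c * (A' a a' * B' b b')) ->
  prod_op ket A B = c *: prod_op ket A' B'.
Proof.
move=> h; rewrite /prod_op scaler_sumr; apply: eq_bigr => a _.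
rewrite scaler_sumr; apply: eq_bigr => a' _.
rewrite scaler_sumr; apply: eq_bigr => b _.
rewrite scaler_sumr; apply: eq_bigr => b' _.
by rewrite scalerA h.
Qed.

Lemma prod_opZl c (A : 'M[algC]_m) (B : 'M[algC]_k) :
  prod_op ket (c *: A) B = c *: prod_op ket A B.
Proof. by apply: prod_op_scale => *; rewrite mxE mulrA. Qed.

Lemma prod_opZr c (A : 'M[algC]_m) (B : 'M[algC]_k) :
  prod_op ket A (c *: B) = c *: prod_op ket A B.
Proof. by apply: prod_op_scale => *; rewrite mxE mulrCA. Qed.

Lemma prod_opDl (A1 A2 : 'M[algC]_m) (B : 'M[algC]_k) :
  prod_op ket (A1 + A2) B = prod_op ket A1 B + prod_op ket A2 B.
Proof.
rewrite /prod_op -big_split; apply: eq_bigr => a _.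
rewrite -big_split; apply: eq_bigr => a' _.
rewrite -big_split; apply: eq_bigr => b _.
rewrite -big_split; apply: eq_bigr => b' _.
by rewrite mxE mulrDl scalerDl.
Qed.

Lemma prod_opDr (A : 'M[algC]_m) (B1 B2 : 'M[algC]_k) :
  prod_op ket A (B1 + B2) = prod_op ket A B1 + prod_op ket A B2.
Proof.
rewrite /prod_op -big_split; apply: eq_bigr => a _.
rewrite -big_split; apply: eq_bigr => a' _.
rewrite -big_split; apply: eq_bigr => b _.
rewrite -big_split; apply: eq_bigr => b' _.
by rewrite mxE mulrDr scalerDl.
Qed.

Lemma prod_op_suml I (r : seq I) (P : pred I) (F : I -> 'M[algC]_m) B :
  prod_op ket (\sum_(i <- r | P i) F i) B = \sum_(i <- r | P i) prod_op ket (F i) B.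
Proof.
elim/big_rec2: _ => [|i A1 A2 _ <-]; last by rewrite prod_opDl.
by rewrite -(scale0r (0 : 'M[algC]_m)) prod_opZl scale0r.
Qed.

Lemma prod_op_sumr I (r : seq I) (P : pred I) A (F : I -> 'M[algC]_k) :
  prod_op ket A (\sum_(i <- r | P i) F i) = \sum_(i <- r | P i) prod_op ket A (F i).
Proof.
elim/big_rec2: _ => [|i B1 B2 _ <-]; last by rewrite prod_opDr.
by rewrite -(scale0r (0 : 'M[algC]_k)) prod_opZr scale0r.
Qed.

Lemma product_vector_projector (x : 'I_m -> algC) (y : 'I_k -> algC) :
  (\sum_a \sum_b (x a * y b) *: ket a b) *m
     adjmx (\sum_a \sum_b (x a * y b) *: ket a b)
  = prod_op ket (outer x) (outer y).
Proof.
set phi := \sum_a _; rewrite {1}/phi mulmx_suml /prod_op; apply: eq_bigr => a _.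
rewrite mulmx_suml -exchange_big /=; apply: eq_bigr => b _.
rewrite -scalemxAl /phi adjmx_sum mulmx_sumr scaler_sumr; apply: eq_bigr => a' _.
rewrite adjmx_sum mulmx_sumr scaler_sumr; apply: eq_bigr => b' _.
rewrite adjmxZ -scalemxAr scalerA /ketbra !mxE rmorphM /=; congr (_ *: _); ring.
Qed.

Lemma prod_op_inV (A : 'M[algC]_m) (B : 'M[algC]_k) (w : 'cV[algC]_n) :
  inV ket (prod_op ket A B *m w).
Proof.
exists (fun a b => \sum_a' \sum_b' (A a a' * B b b') * ip (ket a' b') w).
rewrite /prod_op mulmx_suml; apply: eq_bigr => a _.
rewrite mulmx_suml (eq_bigr (fun a' =>
  \sum_b \sum_b' ((A a a' * B b b') * ip (ket a' b') w) *: ket a b)); last first.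
  move=> a' _; rewrite mulmx_suml; apply: eq_bigr => b _.
  by rewrite mulmx_suml; apply: eq_bigr => b' _; rewrite -scalemxAl ketbra_mul scalerA.
rewrite exchange_big; apply: eq_bigr => b _; rewrite scaler_suml; apply: eq_bigr => a' _.
by rewrite scaler_suml.
Qed.

Lemma diag_prod_op (pb : 'I_m -> algC) (pt : 'I_k -> algC) :
  prod_op ket (diag_mx (\row_i pb i)) (diag_mx (\row_j pt j)) =
  \sum_i \sum_j (pb i * pt j) *: ketbra (ket i j) (ket i j).
Proof.
rewrite /prod_op; apply: eq_bigr => i _.
rewrite (big_only1 i) // => [|i' ne _]; last first.
  apply: big1 => j _; apply: big1 => j' _.
  by rewrite !mxE eq_sym (negbTE ne) mulr0n mul0r scale0r.
apply: eq_bigr => j _.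
rewrite (big_only1 j) // => [|j' ne _]; last first.
  by rewrite !mxE eq_sym (negbTE ne) mulr0n mulr0 scale0r.
by rewrite !mxE !eqxx !mulr1n.
Qed.

Lemma product_image_state (U : 'M[algC]_n) (P : pred 'I_m) (Q : pred 'I_k)
    (u : 'I_m -> 'I_m -> algC) (v : 'I_k -> 'I_k -> algC)
    (pb : 'I_m -> algC) (pt : 'I_k -> algC) :
  (forall i j, P i -> Q j ->
     U *m ket i j = \sum_a \sum_b (u i a * v j b) *: ket a b) ->
  (forall i, ~~ P i -> pb i = 0) -> (forall j, ~~ Q j -> pt j = 0) ->
  U *m prod_op ket (diag_mx (\row_i pb i)) (diag_mx (\row_j pt j)) *m adjmx U
  = prod_op ket (mixture pb u) (mixture pt v).
Proof.
move=> Huv Hpb Hpt.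
rewrite diag_prod_op mulmx_sumr mulmx_suml prod_op_suml; apply: eq_bigr => i _.
rewrite mulmx_sumr mulmx_suml prod_op_sumr; apply: eq_bigr => j _.
rewrite prod_opZl prod_opZr scalerA -scalemxAr -scalemxAl.
have [Pi|/Hpb->] := boolP (P i); last by rewrite !mul0r !scale0r.
have [Qj|/Hpt->] := boolP (Q j); last by rewrite mulr0 !scale0r.
rewrite /ketbra !mulmxA -(mulmxA _ _ (adjmx U)) -adjmxM Huv //.
by rewrite product_vector_projector.
Qed.

End OrthonormalFamily.

Section ProductStates.
Variables (n m k : nat) (ket : 'I_m -> 'I_k -> 'cV[algC]_n).
Variables (Ab At : 'M[algC]_n -> Prop).
Hypothesis Horth : orthonormal ket.
Hypothesis HA1b : bottom_transitions ket Ab.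
Hypothesis HA1t : top_transitions ket At.

Lemma transition_expect psi (X Y : 'M[algC]_n) a a' b b' : inV ket psi ->
  (forall l j, X *m ket l j = (if l == a then ket a' j else 0)) ->
  (forall i l, Y *m ket i l = (if l == b then ket i b' else 0)) ->
  ip psi (X *m (Y *m psi)) = ip (ket a b) psi * (ip (ket a' b') psi)^*.
Proof.
move=> Hpsi HX HY.
have XY l r : X *m (Y *m ket l r) = ((l == a) && (r == b))%:R *: ket a' b'.
  rewrite HY; have [_|_] := eqVneq r b; last by rewrite mulmx0 andbF scale0r.
  by rewrite HX andbT; case: eqP; rewrite ?scale1r ?scale0r.
suff -> : X *m (Y *m psi) = ip (ket a b) psi *: ket a' b' by rewrite ipZr -ip_conj.
rewrite {1}(inV_expand Horth Hpsi) 2!mulmx_sumr (big_only1 a) // => [|l ne _].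
  rewrite 2!mulmx_sumr (big_only1 b) // => [|r ne _].
    by rewrite -!scalemxAr XY !eqxx scale1r.
  by rewrite -!scalemxAr XY (negbTE ne) andbF scale0r scaler0.
rewrite 2!mulmx_sumr big1 // => r _.
by rewrite -!scalemxAr XY (negbTE ne) scale0r scaler0.
Qed.

Lemma product_state psi : inV ket psi -> ip psi psi = 1 ->
  (forall X Y, Ab X -> At Y ->
     ip psi (X *m (Y *m psi)) = ip psi (X *m psi) * ip psi (Y *m psi)) ->
  exists (al : 'I_m -> algC) (ga : 'I_k -> algC),
    forall a b, ip (ket a b) psi = al a * ga b.
Proof.
move=> Hpsi Hnorm HF; pose c a b := ip (ket a b) psi.
have [a0 [b0 nz]] : exists a0 b0, c a0 b0 != 0.
  case: (pickP (fun ab : 'I_m * 'I_k => c ab.1 ab.2 != 0)) => [[a0 b0] nz|c0].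
    by exists a0, b0.
  suff psi0 : psi = 0.
    by move: Hnorm; rewrite {2}psi0 ip0r => /eqP; rewrite eq_sym oner_eq0.
  rewrite (inV_expand Horth Hpsi); apply: big1 => a _; apply: big1 => b _.
  by move: (c0 (a, b)); rewrite /c /= => /negbFE/eqP ->; rewrite scale0r.
(* The coefficient matrix has rank one: c_ab c_00 = c_a0 c_0b, because each
   c_xy conj(c_00) is an expectation that factorizes into bottom and top parts. *)
have rank_one a b : c a b * c a0 b0 = c a b0 * c a0 b.
  have [X1 [HX1 HX1k]] := HA1b a a0; have [X0 [HX0 HX0k]] := HA1b a0 a0.
  have [Y1 [HY1 HY1k]] := HA1t b b0; have [Y0 [HY0 HY0k]] := HA1t b0 b0.
  have E11 := transition_expect Hpsi HX1k HY1k; rewrite HF // in E11.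
  have E10 := transition_expect Hpsi HX1k HY0k; rewrite HF // in E10.
  have E01 := transition_expect Hpsi HX0k HY1k; rewrite HF // in E01.
  have E00 := transition_expect Hpsi HX0k HY0k; rewrite HF // in E00.
  have nz2 : (c a0 b0)^* * (c a0 b0)^* != 0 by rewrite mulf_neq0 // conjC_eq0.
  apply: (mulIf nz2).
  rewrite -/(c a b) -/(c a b0) -/(c a0 b) -/(c a0 b0) in E11 E10 E01 E00.
  transitivity ((c a b * (c a0 b0)^*) * (c a0 b0 * (c a0 b0)^*)); first by ring.
  transitivity ((c a b0 * (c a0 b0)^*) * (c a0 b * (c a0 b0)^*)); last by ring.
  by rewrite -E11 -E10 -E01 -E00; ring.
exists (fun a => c a b0 / c a0 b0), (fun b => c a0 b) => a b.
by rewrite mulrAC -rank_one mulfK.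
Qed.

End ProductStates.

(* Locality: by (A1), (A2) and the commutation of the two edge algebras, an
   operator supported at the bottom edge acts trivially on the top label. *)
Section Locality.
Variables (n m k : nat) (ket : 'I_m -> 'I_k -> 'cV[algC]_n).
Variables (Ab At : 'M[algC]_n -> Prop) (Omt : 'I_k).
Hypothesis Horth : orthonormal ket.
Hypotheses (HAb : star_algebra Ab) (HAt : star_algebra At).
Hypothesis Hcomm : forall X Y, Ab X -> At Y -> X *m Y = Y *m X.
Hypothesis HA1b : bottom_transitions ket Ab.
Hypothesis HA1t : top_transitions ket At.
Hypothesis HA2 : edge_factorization ket Ab At.

(* Diagonal elements of a bottom operator do not depend on the top label:
   write |a,b> = O|a,Omt> with O a top operator, commute O through, and
   factorize the expectation by (A2). *)
Lemma bottom_expect_top_invariant Z a b : Ab Z ->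
  ip (ket a b) (Z *m ket a b) = ip (ket a Omt) (Z *m ket a Omt).
Proof.
case: HAt => _ _ _ AtM AtA HZ.
have [O [HO HOk]] := HA1t Omt b.
have eK : ket a b = O *m ket a Omt by rewrite HOk eqxx.
rewrite eK ip_adjl !mulmxA -(Hcomm HZ (AtA _ HO)) -(mulmxA Z).
rewrite -braketE HA2 //; last exact: AtM (AtA _ HO) HO.
rewrite [X in _ * X]braketE -mulmxA -ip_adjl -eK ket_ip // !eqxx mulr1.
by rewrite braketE.
Qed.

Lemma bottom_matrix_elements X a b a' b' : Ab X ->
  ip (ket a' b') (X *m ket a b) = (b' == b)%:R * ip (ket a' Omt) (X *m ket a Omt).
Proof.
move=> HX; case: HAb => _ _ _ AbM AbA; case: (HAt) => _ _ _ _ AtA.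
have [Ob [HOb HObk]] := HA1b a a'.
have HZ : Ab (adjmx Ob *m X) by exact: AbM (AbA _ HOb) HX.
suff elements b1 b2 : ip (ket a' b2) (X *m ket a b1) =
    (b2 == b1)%:R * ip (ket a Omt) (adjmx Ob *m X *m ket a Omt).
  by rewrite elements (elements Omt Omt) eqxx mul1r.
have [Ot [HOt HOtk]] := HA1t b1 b2.
have eK : ket a' b2 = Ob *m (Ot *m ket a b1) by rewrite HOtk eqxx HObk eqxx.
rewrite eK ip_adjl ip_adjl !mulmxA -(mulmxA (adjmx Ot)) -(Hcomm HZ (AtA _ HOt)).
rewrite -braketE HA2 //; last exact: AtA.
rewrite mulrC [X in X * _]braketE -ip_adjl HOtk eqxx ket_ip // eqxx /=.
by rewrite braketE bottom_expect_top_invariant // -mulmxA.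
Qed.

Lemma bottom_action_coords X psi a b : Ab X -> inV ket psi ->
  ip (ket a b) (X *m psi)
  = \sum_a' ip (ket a Omt) (X *m ket a' Omt) * ip (ket a' b) psi.
Proof.
move=> HX Hpsi; rewrite {1}(inV_expand Horth Hpsi) mulmx_sumr ip_sumr.
apply: eq_bigr => a' _; rewrite mulmx_sumr ip_sumr (big_only1 b) // => [|b' ne _].
  rewrite -scalemxAr ipZr [ip (ket a b) _]bottom_matrix_elements //.
  by rewrite eqxx mul1r mulrC.
rewrite -scalemxAr ipZr [ip (ket a b) _]bottom_matrix_elements //.
by rewrite eq_sym (negbTE ne) mul0r mulr0.
Qed.

End Locality.

Lemma inV_swap n m k (ket : 'I_m -> 'I_k -> 'cV[algC]_n) psi :
  inV ket psi -> inV (fun j i => ket i j) psi.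
Proof. by case=> c ->; exists (fun j i => c i j); rewrite exchange_big. Qed.

Lemma top_action_coords n m k (ket : 'I_m -> 'I_k -> 'cV[algC]_n)
    (Ab At : 'M[algC]_n -> Prop) (Omb : 'I_m)
  (Horth : orthonormal ket) (HAb : star_algebra Ab) (HAt : star_algebra At)
  (Hcomm : forall X Y, Ab X -> At Y -> X *m Y = Y *m X)
  (HA1b : bottom_transitions ket Ab) (HA1t : top_transitions ket At)
  (HA2 : edge_factorization ket Ab At)
  Y psi a b : At Y -> inV ket psi ->
  ip (ket a b) (Y *m psi)
  = \sum_b' ip (ket Omb b) (Y *m ket Omb b') * ip (ket a b') psi.
Proof.
move=> HY /inV_swap Hpsi.
pose ket' j i := ket i j.
apply: (bottom_action_coords (ket := ket') (Ab := At) (At := Ab) Omb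
  _ _ _ _ _ _ _ b a HY Hpsi) => //.
- by move=> j i j' i'; rewrite /ket' Horth andbC.
- by move=> X Y' hX hY; rewrite (Hcomm _ _ hY hX).
- move=> j j'; have [O [HO HOk]] := HA1t j j'.
  by exists O; split => // l i; rewrite /ket' HOk.
- move=> i i'; have [O [HO HOk]] := HA1b i i'.
  by exists O; split => // j l; rewrite /ket' HOk.
- move=> j i Ot Ob hOt hOb.
  by rewrite /ket' -(Hcomm _ _ hOb hOt) HA2 // mulrC.
Qed.

(* Spectra: char_poly (X Y) = char_poly (Y X) for square matrices, via the
   two block factorizations of [['X, X]; [Y, 1]]. *)
Lemma char_poly_mulC (R : idomainType) p (X Y : 'M[R]_p) :
  char_poly (X *m Y) = char_poly (Y *m X).
Proof.
rewrite /char_poly /char_poly_mx !map_mxM.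
set XP := map_mx polyC X; set YP := map_mx polyC Y.
set P := block_mx ('X%:M : 'M[{poly R}]_p) XP YP 1%:M.
have detP : \det P = \det ('X%:M - XP *m YP).
  have -> : P = block_mx 1%:M XP 0 1%:M *m block_mx ('X%:M - XP *m YP) 0 YP 1%:M.
    by rewrite mulmx_block !mul1mx !mul0mx !mulmx1 !add0r subrK.
  by rewrite det_mulmx det_ublock det_lblock !det1 !mul1r mulr1.
have elim_low : block_mx 1%:M 0 (- YP) ('X%:M) *m P
    = block_mx ('X%:M) XP 0 ('X%:M - YP *m XP).
  rewrite /P mulmx_block !mul1mx !mul0mx !addr0 mulmx1 mulNmx scalar_mxC addNr.
  by rewrite addrC mulNmx.
have := congr1 determinant elim_low.
rewrite det_mulmx det_lblock det_ublock detP !det1 !mul1r !det_scalar.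
by move/mulfI; apply; rewrite expf_neq0 // polyX_eq0.
Qed.

Lemma cdot_conj p (x y : 'I_p -> algC) : (cdot x y)^* = cdot y x.
Proof.
by rewrite /cdot rmorph_sum; apply: eq_bigr => a _; rewrite rmorphM /= conjCK mulrC.
Qed.

Lemma mixture_hermitian p (d : 'I_p -> algC) (x : 'I_p -> 'I_p -> algC) c :
  c^* = c -> (forall i, 0 <= d i) -> adjmx (c *: mixture d x) = c *: mixture d x.
Proof.
move=> Hc Hd; rewrite adjmxZ Hc /mixture adjmx_sum; congr (_ *: _).
apply: eq_bigr => i _; rewrite adjmxZ geC0_conj //; congr (_ *: _).
by apply/matrixP => a a'; rewrite adjmxE !mxE rmorphM /= conjCK mulrC.
Qed.

(* If the vectors x_i in the support of the weights d are orthonormal for the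
   rescaled product s * cdot, then s * mixture d x = A diag(d) A^* with
   A^* (s A) = 1 on the support, so it has the spectrum of diag(d). *)
Lemma mixture_spectrum p (d : 'I_p -> algC) (P : pred 'I_p)
    (x : 'I_p -> 'I_p -> algC) s :
  (forall i, ~~ P i -> d i = 0) ->
  (forall i i', P i -> P i' -> s * cdot (x i) (x i') = (i == i')%:R) ->
  char_poly (s *: mixture d x) = char_poly (diag_mx (\row_i d i)).
Proof.
move=> Hd Ho; pose A : 'M[algC]_p := \matrix_(a, i) (if P i then x i a else 0).
have mixtureE : mixture d x = A *m diag_mx (\row_i d i) *m adjmx A.
  apply/matrixP => a a'; rewrite summxE !mxE; apply: eq_bigr => i _.
  rewrite mul_mx_diag !mxE.
  by case: (boolP (P i)) => Pi; [ring | rewrite Hd // !mul0r].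
rewrite mixtureE scalemxAr -mulmxA char_poly_mulC; congr char_poly.
apply/matrixP => i j; rewrite -mulmxA -scalemxAl mul_diag_mx !mxE.
case: (boolP (P i)) => Pi; last by rewrite Hd // !mul0r mul0rn.
rewrite -mulr_natr; congr (_ * _).
case: (boolP (P j)) => Pj.
  rewrite -(Ho i j Pi Pj); congr (_ * _); apply: eq_bigr => a _.
  by rewrite adjmxE !mxE Pi Pj.
have nij : i != j by apply: contraNneq Pj => <-.
by rewrite (negbTE nij) big1 ?mulr0 // => a _; rewrite !mxE (negbTE Pj) mulr0.
Qed.

(* The image of |Omb,Omt> is a product state by
   (A2) transported through U; the other states are reached from it by
   conjugated label-transition operators, which act on one label only. *)
Section FluxInsertion.
Variables (n m k : nat) (ket : 'I_m -> 'I_k -> 'cV[algC]_n).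
Variables (eb : 'I_m -> algC) (et : 'I_k -> algC) (Omb : 'I_m) (Omt : 'I_k).
Variables (Ab At : 'M[algC]_n -> Prop) (U : 'M[algC]_n) (delta : algC).
Hypothesis Horth : orthonormal ket.
Hypotheses (HebO : eb Omb = 0) (HetO : et Omt = 0).
Hypotheses (HAb : star_algebra Ab) (HAt : star_algebra At).
Hypothesis Hcomm : forall X Y, Ab X -> At Y -> X *m Y = Y *m X.
Hypotheses (HUu1 : adjmx U *m U = 1%:M) (HUu2 : U *m adjmx U = 1%:M).
Hypotheses (HUb1 : forall X, Ab X -> Ab (adjmx U *m X *m U))
           (HUb2 : forall X, Ab X -> Ab (U *m X *m adjmx U))
           (HUt1 : forall X, At X -> At (adjmx U *m X *m U))
           (HUt2 : forall X, At X -> At (U *m X *m adjmx U)).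
Hypothesis HA1b : bottom_transitions ket Ab.
Hypothesis HA1t : top_transitions ket At.
Hypothesis HA2 : edge_factorization ket Ab At.
Hypotheses (Hdelta : 0 < delta)
  (HA3 : forall v, inVdelta ket eb et delta v -> inV ket (U *m v)).

Let low_b0 : eb Omb <= delta. Proof. by rewrite HebO ltW. Qed.
Let low_t0 : et Omt <= delta. Proof. by rewrite HetO ltW. Qed.

Lemma U_low_inV i j : eb i <= delta -> et j <= delta -> inV ket (U *m ket i j).
Proof. by move=> hi hj; apply/HA3/ket_in_span. Qed.

Lemma omega_image_product : exists (al : 'I_m -> algC) (ga : 'I_k -> algC),
  forall a b, ip (ket a b) (U *m ket Omb Omt) = al a * ga b.
Proof.
apply: (product_state Horth HA1b HA1t (U_low_inV low_b0 low_t0)).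
  by rewrite ip_isometry // ket_ip // !eqxx.
move=> X Y hX hY; have := HA2 Omb Omt (HUb1 hX) (HUt1 hY).
have conjM : adjmx U *m X *m U *m (adjmx U *m Y *m U) = adjmx U *m (X *m Y) *m U.
  by rewrite !mulmxA -(mulmxA _ U (adjmx U)) HUu2 mulmx1.
by rewrite conjM !braketE !ip_adjl !mulmxA.
Qed.

Lemma bottom_transport i :
  exists2 B, Ab B & forall j, U *m ket i j = B *m (U *m ket Omb j).
Proof.
have [O [HO HOk]] := HA1b Omb i.
exists (U *m O *m adjmx U) => [|j]; first exact: HUb2.
by apply: conj_transport; rewrite // HOk eqxx.
Qed.

Lemma top_transport j :
  exists2 T, At T & forall i, U *m ket i j = T *m (U *m ket i Omt).
Proof.
have [O [HO HOk]] := HA1t Omt j.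
exists (U *m O *m adjmx U) => [|i]; first exact: HUt2.
by apply: conj_transport; rewrite // HOk eqxx.
Qed.

(* U|i,j> = u_i (x) v_j for low-energy i, j: first propagate the product form
   of U|Omb,Omt> along the top label with top operators, which act on the top
   coordinate only, then along the bottom label with bottom operators. *)
Lemma low_image_factorizes :
  exists (u : 'I_m -> 'I_m -> algC) (v : 'I_k -> 'I_k -> algC),
  forall i j, eb i <= delta -> et j <= delta ->
    U *m ket i j = \sum_a \sum_b (u i a * v j b) *: ket a b.
Proof.
have [al [ga Hag]] := omega_image_product.
have /fin_all_exists [v Hv] : forall j, exists vj : 'I_k -> algC,
    forall a b, ip (ket a b) (U *m ket Omb j) = al a * vj b.
  move=> j; have [T HT HTj] := top_transport j.
  exists (fun b => \sum_b' ip (ket Omb b) (T *m ket Omb b') * ga b') => a b.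
  rewrite HTj (top_action_coords Omb Horth HAb HAt Hcomm HA1b HA1t HA2 a b HT
    (U_low_inV low_b0 low_t0)) mulr_sumr.
  by apply: eq_bigr => b' _; rewrite Hag mulrCA.
have /fin_all_exists [u Hu] : forall i, exists ui : 'I_m -> algC,
    forall j a b, et j <= delta -> ip (ket a b) (U *m ket i j) = ui a * v j b.
  move=> i; have [B HB HBi] := bottom_transport i.
  exists (fun a => \sum_a' ip (ket a Omt) (B *m ket a' Omt) * al a') => j a b hj.
  rewrite HBi (bottom_action_coords Omt Horth HAb HAt Hcomm HA1b HA1t HA2 a b HB
    (U_low_inV low_b0 hj)) mulr_suml.
  by apply: eq_bigr => a' _; rewrite Hv mulrA.
exists u, v => i j hi hj; rewrite {1}(inV_expand Horth (U_low_inV hi hj)).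
by apply: eq_bigr => a _; apply: eq_bigr => b _; rewrite Hu.
Qed.

End FluxInsertion.

Unset Implicit Arguments.

Theorem mainTheorem4
  (n m k : nat) (ket : 'I_m -> 'I_k -> 'cV[algC]_n)
  (eb : 'I_m -> algC) (et : 'I_k -> algC) (Omb : 'I_m) (Omt : 'I_k)
  (Ab At : 'M[algC]_n -> Prop) (U : 'M[algC]_n)
  (* orthonormal family *)
  (Horth : forall i j i' j',
      adjmx (ket i j) *m ket i' j' = ((i == i') && (j == j'))%:R%:M)
  (* real energies, Omega is the minimum with value 0 *)
  (Heb_real : forall i, eb i \is Num.real)
  (Het_real : forall j, et j \is Num.real)
  (HebO : eb Omb = 0) (HetO : et Omt = 0)
  (Heb0 : forall i, 0 <= eb i) (Het0 : forall j, 0 <= et j)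
  (* local algebras *)
  (HAb : star_algebra Ab) (HAt : star_algebra At)
  (Hcomm : forall X Y, Ab X -> At Y -> X *m Y = Y *m X)
  (* U unitary and locality-preserving *)
  (HUu1 : adjmx U *m U = 1%:M) (HUu2 : U *m adjmx U = 1%:M)
  (HUb1 : forall X, Ab X -> Ab (adjmx U *m X *m U))
  (HUb2 : forall X, Ab X -> Ab (U *m X *m adjmx U))
  (HUt1 : forall X, At X -> At (adjmx U *m X *m U))
  (HUt2 : forall X, At X -> At (U *m X *m adjmx U))
  (* (A1) *)
  (HA1b : forall i i' : 'I_m, exists O, Ab O /\
      forall (l : 'I_m) (j : 'I_k), O *m ket l j = (if l == i then ket i' j else 0))
  (HA1t : forall j j' : 'I_k, exists O, At O /\
      forall (i : 'I_m) (l : 'I_k), O *m ket i l = (if l == j then ket i j' else 0))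
  (* (A2) *)
  (HA2 : forall i j Ob Ot, Ab Ob -> At Ot ->
      braket (ket i j) (Ob *m Ot) (ket i j)
      = braket (ket i j) Ob (ket i j) * braket (ket i j) Ot (ket i j))
  (* (A3) *)
  (delta : algC) (Hdelta : 0 < delta)
  (HA3 : forall v, inVdelta ket eb et delta v -> inV ket (U *m v))
  (* thermal-like probability vectors *)
  (pb : 'I_m -> algC) (pt : 'I_k -> algC)
  (Hpb0 : forall i, 0 <= pb i) (Hpb1 : \sum_(i < m) pb i = 1)
  (Hpbd : forall i, ~~ (eb i <= delta) -> pb i = 0)
  (Hpt0 : forall j, 0 <= pt j) (Hpt1 : \sum_(j < k) pt j = 1)
  (Hptd : forall j, ~~ (et j <= delta) -> pt j = 0) :
  let rhob : 'M[algC]_m := diag_mx (\row_i pb i) in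
  let rhot : 'M[algC]_k := diag_mx (\row_j pt j) in
  let rho0 := prod_op ket rhob rhot in
  (forall w, inV ket (U *m rho0 *m adjmx U *m w)) /\
  exists (sigb : 'M[algC]_m) (sigt : 'M[algC]_k),
    [/\ adjmx sigb = sigb, adjmx sigt = sigt,
        U *m rho0 *m adjmx U = prod_op ket sigb sigt,
        char_poly sigb = char_poly rhob &
        char_poly sigt = char_poly rhot].
Proof.
move=> rhob rhot rho0.
have low_b0 : eb Omb <= delta by rewrite HebO ltW.
have low_t0 : et Omt <= delta by rewrite HetO ltW.
have [u [v Huv]] := low_image_factorizes Horth HebO HetO HAb HAt Hcomm HUu1 HUu2
  HUb1 HUb2 HUt1 HUt2 HA1b HA1t HA2 Hdelta HA3.
(* Unitarity makes the factors orthonormal up to normalizations r and s. *)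
have gram i i' j j' :
    eb i <= delta -> eb i' <= delta -> et j <= delta -> et j' <= delta ->
    ((i == i') && (j == j'))%:R = cdot (u i) (u i') * cdot (v j) (v j').
  move=> hi hi' hj hj'.
  exact: (isometry_product_gram Horth HUu1 (Huv _ _ hi hj) (Huv _ _ hi' hj')).
pose r := cdot (u Omb) (u Omb); pose s := cdot (v Omt) (v Omt).
have rs1 : r * s = 1 by rewrite /r /s -(gram Omb Omb Omt Omt) // !eqxx.
have Hrho : U *m rho0 *m adjmx U = prod_op ket (mixture pb u) (mixture pt v).
  exact: product_image_state Huv Hpbd Hptd.
split=> [w|]; first by rewrite Hrho; exact: prod_op_inV.
exists (s *: mixture pb u), (r *: mixture pt v); split.
- by apply: mixture_hermitian; rewrite // cdot_conj.
- by apply: mixture_hermitian; rewrite // cdot_conj.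
- by rewrite Hrho prod_opZl prod_opZr scalerA mulrC rs1 scale1r.
- apply: (mixture_spectrum Hpbd) => i i' hi hi'.
  by rewrite mulrC -(gram i i' Omt Omt) // eqxx andbT.
- apply: (mixture_spectrum Hptd) => j j' hj hj'.
  by rewrite -(gram Omb Omb j j') // eqxx.
Qed.
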